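(* Let $2\le R\le K$, $\epsilon\in(0,1)$, and let $\mathcal{Y}_1,\ldots,\mathcal{Y}_m\subseteq[K]$ with $|\mathcal{Y}_i|=R$ for all $i$. Let $Z$ be uniform on $[K]$ and let $Y=(Y_1,\ldots,Y_m)$ be such that, conditionally on $Z=k$, the $Y_i$ are independent, with $Y_i=k$ almost surely if $k\in\mathcal{Y}_i$ and $Y_i$ uniform on $\mathcal{Y}_i$ if $k\notin\mathcal{Y}_i$. If some decoder $g:\mathcal{Y}_1\times\cdots\times\mathcal{Y}_m\to[K]$ satisfies $\mathbb{P}(g(Y)\ne Z)\le\epsilon$, then $$m\ \ge\ \left\lceil \frac{K}{R}\cdot\frac{(1-\epsilon)\log K-\log 2}{\log R}\right\rceil.$$
   Context: $[K]=\{1,\ldots,K\}$; $\log$ denotes the natural logarithm. *)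

From HB Require Import structures.
From mathcomp Require Import all_boot all_order all_algebra.
From mathcomp Require Import reals exp.
Set Implicit Arguments. Unset Strict Implicit. Unset Printing Implicit Defensive.
Import Order.TTheory GRing.Theory Num.Theory.
Local Open Scope ring_scope.

Definition chan (R : realType) (K Rs : nat) (Yi : {set 'I_K}) (k y : 'I_K) : R :=
  if k \in Yi then (y == k)%:R else (y \in Yi)%:R / Rs%:R.

Definition joint (R : realType) (K Rs m : nat) (Ys : 'I_m -> {set 'I_K})
  (k : 'I_K) (y : {ffun 'I_m -> 'I_K}) : R :=
  K%:R^-1 * \prod_(i < m) chan R Rs (Ys i) k (y i).

Definition err_prob (R : realType) (K Rs m : nat) (Ys : 'I_m -> {set 'I_K})
  (g : {ffun 'I_m -> 'I_K} -> 'I_K) : R :=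
  \sum_(k : 'I_K) \sum_(y : {ffun 'I_m -> 'I_K} | g y != k) joint R Rs Ys k y.

From HB Require Import structures.
From mathcomp Require Import all_boot all_order all_algebra.
From mathcomp Require Import reals exp ring lra.
Import Order.TTheory GRing.Theory Num.Theory.
Set Implicit Arguments. Unset Strict Implicit.
Local Open Scope ring_scope.

(* Proof strategy: a change-of-measure (Fano-type) argument.

   1. Pointwise, [ln x <= x - 1] gives, for c >= 0, q > 0 and a test
      value t > 0, the variational inequality
            c ln t + c - q t  <=  c ln (c / q).
   2. Summed over a joint law J(a, b) on a finite product A x B, with the
      reference law q(b)/|A| (uniform a, independent b) and the test value
      t(a,b) = |A|/2 if the decoder guesses a from b and 1/2 otherwise, this
      yields a general Fano inequality in divergence form:
            (1 - P(error)) ln |A| - ln 2  <=  D(J || q/|A|).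
   3. For the channel of the theorem, with q the law of Y when every Y_i is
      uniform on its set, the likelihood ratio K J(k,y)/q(y) equals
      Rs^(number of sets containing k), so by double counting the
      divergence is exactly m Rs ln Rs / K.
   Rearranging (1-eps) ln K - ln 2 <= m Rs ln Rs / K gives the bound on m. *)

(* The variational (Gibbs) inequality for one term; the case
   [c = 0] is allowed with [q = 0], as happens off the support. *)
Lemma ln_change_of_measure (R : realType) (c q t : R) :
  0 <= c -> 0 <= q -> 0 < t -> (0 < c -> 0 < q) ->
  c * ln t + c - q * t <= c * ln (c / q).
Proof.
move=> c_ge0 q_ge0 t_gt0 supp.
have [->|c_neq0] := eqVneq c 0.
  by rewrite !mul0r addr0 sub0r oppr_le0 mulr_ge0 // ltW.
have c_gt0 : 0 < c by rewrite lt_def c_neq0 c_ge0.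
have q_gt0 := supp c_gt0.
set u := q * t / c.
have u_gt0 : 0 < u by rewrite /u !(mulr_gt0, invr_gt0).
have ln_u_le : ln u <= u - 1.
  have := @le_ln1Dx R (u - 1); rewrite [1 + _]addrC subrK.
  by apply; rewrite ltrBrDl subrr.
have ln_u : ln u = ln t - ln (c / q).
  rewrite -ln_div ?posrE ?divr_gt0 //; congr ln.
  by rewrite /u; field; rewrite (gt_eqF q_gt0) c_neq0.
have : c * ln u <= c * (u - 1) by rewrite ler_wpM2l // ltW.
rewrite ln_u /u mulrBr mulrBr mulr1 [c * (q * t / c)]mulrC divfK //.
lra.
Qed.

Section FanoDivergence.
Variables (R : realType) (A B : finType).

Definition guess_score (g : B -> A) (a : A) (b : B) : R :=
  if g b == a then #|A|%:R / 2 else 2^-1.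

Lemma guess_score_gt0 g a b : (0 < #|A|)%N -> 0 < guess_score g a b.
Proof.
move=> A_gt0; rewrite /guess_score.
by case: (g b == a); rewrite ?divr_gt0 ?invr_gt0 ?ltr0n.
Qed.

(* Summed over the possible inputs, the score is at most |A|, so the score
   has mass at most one under the reference law. *)
Lemma guess_score_mass g b : \sum_a guess_score g a b <= #|A|%:R.
Proof.
rewrite (bigD1 (g b)) //= /guess_score eqxx.
rewrite (eq_bigr (fun _ => 2^-1)) => [|a /negbTE]; last by rewrite eq_sym => ->.
have : \sum_(a | a != g b) (2^-1 : R) <= 2^-1 * #|A|%:R.
  rewrite mulr_natr -sumr_const [X in _ <= X](bigD1 (g b)) //=.
  by rewrite lerDr invr_ge0 ler0n.
lra.
Qed.

Lemma guess_score_log (J : A -> B -> R) g :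
  (0 < #|A|)%N -> \sum_a \sum_b J a b = 1 ->
  \sum_a \sum_b J a b * ln (guess_score g a b)
    = (1 - \sum_a \sum_(b | g b != a) J a b) * ln #|A|%:R - ln 2.
Proof.
move=> A_gt0 J_sum1.
set err := \sum_a \sum_(b | g b != a) J a b.
set corr := \sum_a \sum_(b | g b == a) J a b.
have corr_err : corr = 1 - err.
  rewrite -J_sum1 /corr /err -sumrB; apply: eq_bigr => a _.
  by rewrite [\sum_b J a b](bigID (fun b => g b == a)) /= addrK.
have -> : \sum_a \sum_b J a b * ln (guess_score g a b)
    = corr * ln (#|A|%:R / 2) + err * ln 2^-1.
  rewrite /corr /err !mulr_suml -big_split /=; apply: eq_bigr => a _.
  rewrite (bigID (fun b => g b == a)) /= !mulr_suml.
  congr (_ + _); apply: eq_bigr => b; rewrite /guess_score.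
    by move=> ->; rewrite mulrC.
  by move=> /negbTE ->; rewrite mulrC.
rewrite ln_div ?lnV ?posrE ?ltr0n // corr_err; ring.
Qed.

Lemma fano_divergence (J : A -> B -> R) (q : B -> R) (g : B -> A) :
  (forall a b, 0 <= J a b) -> (forall b, 0 <= q b) ->
  (forall a b, 0 < J a b -> 0 < q b) ->
  \sum_a \sum_b J a b = 1 -> \sum_b q b = 1 ->
  (1 - \sum_a \sum_(b | g b != a) J a b) * ln #|A|%:R - ln 2
    <= \sum_a \sum_b J a b * ln (#|A|%:R * J a b / q b).
Proof.
move=> J_ge0 q_ge0 J_supp J_sum1 q_sum1.
have A_gt0 : (0 < #|A|)%N.
  case: (pickP A) => [a _|A0]; first by apply/card_gt0P; exists a.
  by move: J_sum1; rewrite big_pred0 // => /eqP; rewrite eq_sym oner_eq0.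
have N_gt0 : (0 : R) < #|A|%:R by rewrite ltr0n.
pose Q b := q b / #|A|%:R.
have pointwise a b : J a b * ln (guess_score g a b) + J a b - Q b * guess_score g a b
    <= J a b * ln (#|A|%:R * J a b / q b).
  rewrite [_ * J a b / q b](_ : _ = J a b / Q b); last first.
    by rewrite /Q invf_div mulrA [_ * J a b]mulrC.
  apply: ln_change_of_measure.
  - exact: J_ge0.
  - by rewrite divr_ge0 // ltW.
  - exact: guess_score_gt0.
  - by move=> /J_supp q_gt0; rewrite divr_gt0.
have mass : \sum_a \sum_b Q b * guess_score g a b <= 1.
  rewrite exchange_big /= -q_sum1; apply: ler_sum => b _.
  rewrite -mulr_sumr /Q -mulrA ler_piMr // ler_pdivrMl //.
  by rewrite mulr1 guess_score_mass.
apply: le_trans (ler_sum _ (fun a _ => ler_sum _ (fun b _ => pointwise a b))).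
rewrite -guess_score_log //.
rewrite [X in _ <= X](_ : _ = \sum_a \sum_b J a b * ln (guess_score g a b)
    + \sum_a \sum_b J a b - \sum_a \sum_b Q b * guess_score g a b); last first.
  rewrite -big_split -sumrB /=; apply: eq_bigr => a _.
  by rewrite -big_split -sumrB.
rewrite J_sum1; lra.
Qed.

End FanoDivergence.

Section ChannelDivergence.
Variables (R : realType) (K Rs m : nat) (Ys : 'I_m -> {set 'I_K}).
Hypothesis Rs_gt0 : (0 < Rs)%N.
Hypothesis card_Ys : forall i, #|Ys i| = Rs.

Definition uniform_output (y : {ffun 'I_m -> 'I_K}) : R :=
  \prod_i ((y i \in Ys i)%:R / Rs%:R).

Definition coverage (k : 'I_K) : nat := \sum_i (k \in Ys i : nat).

Lemma uniform_set_sum (Y : {set 'I_K}) : #|Y| = Rs ->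
  \sum_j ((j \in Y)%:R / Rs%:R : R) = 1.
Proof.
move=> card_Y; rewrite -mulr_suml.
have -> : \sum_j ((j \in Y)%:R : R) = \sum_(j in Y) 1.
  by rewrite [RHS]big_mkcond; apply: eq_bigr => j _; case: (j \in Y).
by rewrite sumr_const card_Y divff // pnatr_eq0 -lt0n.
Qed.

Lemma chan_ge0 (Y : {set 'I_K}) k j : 0 <= chan R Rs Y k j.
Proof. by rewrite /chan; case: ifP => _; rewrite ?divr_ge0 ?ler0n. Qed.

Lemma chan_sum1 (Y : {set 'I_K}) k : #|Y| = Rs -> \sum_j chan R Rs Y k j = 1.
Proof.
move=> card_Y; rewrite /chan; case: (k \in Y); last exact: uniform_set_sum.
by rewrite (bigD1 k) //= eqxx big1 ?addr0 // => j /negbTE ->.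
Qed.

Lemma joint_ge0 k y : 0 <= joint R Rs Ys k y.
Proof.
by rewrite mulr_ge0 ?invr_ge0 ?ler0n // prodr_ge0 // => i _; apply: chan_ge0.
Qed.

(* Given Z = k, the coordinates are independent, so the conditional law
   has total mass one: each slice of the joint law carries mass 1/K. *)
Lemma joint_slice k : \sum_y joint R Rs Ys k y = K%:R^-1.
Proof.
rewrite -mulr_sumr -(bigA_distr_bigA (fun i j => chan R Rs (Ys i) k j)) /=.
by rewrite big1 ?mulr1 // => i _; apply: chan_sum1.
Qed.

Lemma joint_sum1 : (0 < K)%N -> \sum_k \sum_y joint R Rs Ys k y = 1.
Proof.
move=> K_gt0; under eq_bigr do rewrite joint_slice.
by rewrite sumr_const card_ord -[_ *+ K]mulr_natr mulVf // pnatr_eq0 -lt0n.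
Qed.

Lemma uniform_output_ge0 y : 0 <= uniform_output y.
Proof. by rewrite prodr_ge0 // => i _; rewrite divr_ge0 ?ler0n. Qed.

Lemma uniform_output_sum1 : \sum_y uniform_output y = 1.
Proof.
rewrite -(bigA_distr_bigA (fun i j => ((j \in Ys i)%:R / Rs%:R : R))) /=.
by rewrite big1 // => i _; apply: uniform_set_sum.
Qed.

Lemma likelihood_ratio k (y : {ffun 'I_m -> 'I_K}) : \prod_i chan R Rs (Ys i) k (y i) != 0 ->
  \prod_i chan R Rs (Ys i) k (y i) = Rs%:R ^+ coverage k * uniform_output y.
Proof.
move=> /prodf_neq0 chan_neq0.
rewrite /coverage /uniform_output -prodrXr -big_split /=; apply: eq_bigr => i _.
have := chan_neq0 i isT; rewrite /chan; case: ifP => k_in.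
  case: (y i =P k) => [->|_]; last by rewrite eqxx.
  by rewrite k_in /= expr1 mul1r mulfV // pnatr_eq0 -lt0n.
by rewrite expr0 mul1r.
Qed.

Lemma joint_support k (y : {ffun 'I_m -> 'I_K}) :
  0 < joint R Rs Ys k y -> 0 < uniform_output y.
Proof.
rewrite lt0r mulf_eq0 negb_or => /andP[/andP[_ chan_neq0] _].
have := chan_neq0; rewrite (likelihood_ratio chan_neq0) mulf_eq0 negb_or.
by case/andP=> _ output_neq0; rewrite lt0r output_neq0 uniform_output_ge0.
Qed.

(* Double counting: each of the m sets contains Rs inputs. *)
Lemma coverage_sum : (\sum_k coverage k = m * Rs)%N.
Proof.
rewrite /coverage exchange_big /= (eq_bigr (fun _ => Rs)) ?sum_nat_const ?card_ord //.
move=> i _; rewrite -(card_Ys i) -sum1_card [RHS]big_mkcond.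
by apply: eq_bigr => k _; case: (k \in Ys i).
Qed.

Lemma joint_log_ratio k y :
  joint R Rs Ys k y * ln (K%:R * joint R Rs Ys k y / uniform_output y)
    = joint R Rs Ys k y * ((coverage k)%:R * ln Rs%:R).
Proof.
have [chan_eq0|chan_neq0] := eqVneq (\prod_i chan R Rs (Ys i) k (y i)) 0.
  by rewrite /joint chan_eq0 mulr0 !mul0r.
have K_neq0 : (K%:R : R) != 0 by rewrite pnatr_eq0 -lt0n (leq_ltn_trans _ (ltn_ord k)).
have output_neq0 : uniform_output y != 0.
  by have := chan_neq0; rewrite (likelihood_ratio chan_neq0) mulf_eq0 negb_or => /andP[].
congr (_ * _); rewrite /joint (likelihood_ratio chan_neq0).
rewrite [_ / _](_ : _ = Rs%:R ^+ coverage k); last by rewrite mulVKf // mulfK.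
by rewrite lnXn ?ltr0n // mulr_natl.
Qed.

Lemma channel_divergence :
  \sum_k \sum_y joint R Rs Ys k y * ln (K%:R * joint R Rs Ys k y / uniform_output y)
    = (m * Rs)%:R / K%:R * ln Rs%:R.
Proof.
under eq_bigr => k _ do
  rewrite (eq_bigr _ (fun y _ => joint_log_ratio k y)) -mulr_suml joint_slice.
rewrite -mulr_sumr -mulr_suml -natr_sum coverage_sum; ring.
Qed.

End ChannelDivergence.

Theorem theorem4 (R : realType) (K Rs m : nat) (eps : R)
  (Ys : 'I_m -> {set 'I_K}) (g : {ffun 'I_m -> 'I_K} -> 'I_K) :
  (2 <= Rs)%N -> (Rs <= K)%N -> 0 < eps -> eps < 1 ->
  (forall i, #|Ys i| = Rs) ->
  err_prob R Rs Ys g <= eps ->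
  Num.ceil ((K%:R / Rs%:R) * (((1 - eps) * ln (K%:R : R) - ln 2) / ln (Rs%:R : R)))
    <= (m%:Z).
Proof.
move=> Rs_ge2 Rs_le_K _ _ card_Ys err_le_eps.
have Rs_gt0 : (0 < Rs)%N by apply: leq_trans Rs_ge2.
have K_gt0 : (0 < K)%N by apply: leq_trans Rs_le_K.
have K_pos : (0 : R) < K%:R by rewrite ltr0n.
have Rs_pos : (0 : R) < Rs%:R by rewrite ltr0n.
have ln_Rs_pos : 0 < ln (Rs%:R : R) by apply: ln_gt0; rewrite ltr1n.
have ln_K_ge0 : 0 <= ln (K%:R : R) by apply: ln_ge0; rewrite ler1n.
have fano := fano_divergence g (@joint_ge0 R K Rs m Ys) (@uniform_output_ge0 R K Rs m Ys)
  (@joint_support R K Rs m Ys Rs_gt0) (joint_sum1 R Rs_gt0 card_Ys K_gt0)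
  (uniform_output_sum1 R Rs_gt0 card_Ys).
rewrite card_ord channel_divergence // -/(err_prob R Rs Ys g) in fano.
have info_bound : (1 - eps) * ln (K%:R : R) - ln 2 <= (m * Rs)%:R / K%:R * ln Rs%:R.
  apply: le_trans fano; rewrite lerD2r ler_wpM2r // lerD2l lerN2 //.
rewrite real_ceil_le_int ?num_real //.
have -> : (m%:~R : R)
    = K%:R / Rs%:R * ((m * Rs)%:R / K%:R * ln Rs%:R / ln Rs%:R).
  by rewrite natrM; field; rewrite !gt_eqF.
by rewrite ler_wpM2l ?divr_ge0 ?ler0n // ler_wpM2r // invr_ge0 ltW.
Qed.
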